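(* Let $\{f(\mathbf z;\boldsymbol\theta):\boldsymbol\theta\in\Theta\}$, $\Theta\subset\mathbb{R}^p$, be a family of probability mass or density functions on $\mathcal Z\subset\mathbb{R}^q$ of the form $f(\mathbf z;\boldsymbol\theta)=\int_\Omega\varphi(\mathbf v,\mathbf z,\boldsymbol\theta)\,\omega(\mathbf v)\,d\mathbf v$ with $\Omega\subset\mathbb{R}^d$, $\varphi:\Omega\times\mathcal Z\times\Theta\to\mathbb{R}$ and weight function $\omega:\Omega\to\mathbb{R}_+$, and let $\mathbf z_1,\dots,\mathbf z_n$ be i.i.d. from $f(\cdot;\boldsymbol\theta_0)$. For $r\in\mathbb N$ let $\tilde f_r(\mathbf z;\boldsymbol\theta)=\sum_{j=1}^r w_{j,r}\varphi(\mathbf v_{j,r},\mathbf z,\boldsymbol\theta)$ with (possibly random) nodes $\mathbf v_{j,r}\in\Omega$ and weights $w_{j,r}$ not depending on $\mathbf z$. Let $R:\mathbb N\to\mathbb N$, $\tilde L_n(\boldsymbol\theta)=\frac1n\sum_{i=1}^n\log\tilde f_{R(n)}(\mathbf z_i;\boldsymbol\theta)$ and $\hat{\boldsymbol\theta}_{MAL}=\arg\max_{\boldsymbol\theta\in\Theta}\tilde L_n(\boldsymbol\theta)$. Let $\bar{\mathcal E}_0(r)=\sup_{\mathbf z\in\mathcal Z,\boldsymbol\theta\in\Theta}|f(\mathbf z;\boldsymbol\theta)-\tilde f_r(\mathbf z;\boldsymbol\theta)|$. Assume: there is a continuous function $Q_0:\Theta\to\mathbb{R}$ uniquely maximized at $\boldsymbol\theta_0\in\Theta$,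 $\Theta$ is compact, and $L_n(\boldsymbol\theta)=\frac1n\sum_{i=1}^n\log f(\mathbf z_i;\boldsymbol\theta)$ converges uniformly in probability to $Q_0$ on $\Theta$; and (i) there is $\bar\delta>0$ with $f(\mathbf z;\boldsymbol\theta)>\bar\delta$ for all $\mathbf z\in\mathcal Z,\boldsymbol\theta\in\Theta$; (ii) $\varphi(\mathbf v,\mathbf z,\boldsymbol\theta)$ is continuous in $\boldsymbol\theta\in\Theta$; (iii) $\operatorname{plim}_{r\to\infty}\bar{\mathcal E}_0(r)=0$; (iv) $R(n)$ is monotonically increasing in $n$ and $\lim_{n\to\infty}R(n)=\infty$. Then $\hat{\boldsymbol\theta}_{MAL}\to\boldsymbol\theta_0$ in probability. *)

From HB Require Import structures.
From mathcomp Require Import all_boot all_order all_algebra.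
From mathcomp Require Import all_classical all_reals all_analysis.
Set Implicit Arguments. Unset Strict Implicit. Unset Printing Implicit Defensive.
Import Order.TTheory GRing.Theory Num.Theory.
Import numFieldNormedType.Exports.
Local Open Scope classical_set_scope.
Local Open Scope ring_scope.

(* "The probability of the events E n tends to 1", in the outer-probability
   sense (no measurability of E n required): for every delta > 0, eventually
   E n contains a measurable set of probability >= 1 - delta.  Equivalently the
   outer probability of the complement of E n tends to 0. *)
Definition prob_to_one {d} {T : measurableType d} {R : realType}
  (P : probability T R) (E : nat -> set T) : Prop :=
  forall delta : R, 0 < delta ->
    \forall n \near \oo, exists A : set T,
      [/\ measurable A, A `<=` E n & ((1 - delta)%:E <= P A)%E].

Definition mutually_independent {d} {T : measurableType d} {R : realType}
  {d'} {U : measurableType d'} (P : probability T R) (X : nat -> T -> U) : Prop :=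
  forall (s : seq nat) (A : nat -> set U), uniq s ->
    (forall i, measurable (A i)) ->
    P (\big[setI/setT]_(i <- s) (X i @^-1` A i)) =
    (\prod_(i <- s) P (X i @^-1` A i))%E.

(* Monte-Carlo / quadrature approximation
   f~_r(z; theta) = sum_{j=1}^r w_{j,r} phi(v_{j,r}, z, theta)
   (indices j = 0, ..., r-1 here), at the sample point om. *)
Definition ftilde {R : realType} {T V Z Th : Type}
  (phi : V -> Z -> Th -> R) (v : nat -> nat -> T -> V) (w : nat -> nat -> T -> R)
  (r : nat) (om : T) (z : Z) (th : Th) : R :=
  \sum_(j < r) w j r om * phi (v j r om) z th.

Definition avg_loglik {R : realType} {T Z Th : Type}
  (g : Z -> Th -> R) (z : nat -> T -> Z) (n : nat) (om : T) (th : Th) : R :=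
  n%:R^-1 * \sum_(i < n) ln (g (z i om) th).

Definition sup_err {R : realType} {T Z Th : Type} (Zs : set Z) (Ths : set Th)
  (f : Z -> Th -> R) (ft : nat -> T -> Z -> Th -> R) (r : nat) (om : T) : \bar R :=
  ereal_sup [set x | exists z th, [/\ Zs z, Ths th &
                       x = (`|f z th - ft r om z th|)%:E]].

From HB Require Import structures.
From mathcomp Require Import all_boot all_order all_algebra.
From mathcomp Require Import all_classical all_reals all_analysis.
From mathcomp Require Import lra.

Set Implicit Arguments.
Unset Strict Implicit.
Unset Printing Implicit Defensive.
Import Order.TTheory GRing.Theory Num.Theory.
Import numFieldNormedType.Exports.
Local Open Scope classical_set_scope.
Local Open Scope ring_scope.

(* Compactness, continuity and uniqueness of the maximiser give a gap eta > 0
   between Q0(theta0) and the values of Q0 outside the eps-ball around theta0.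
   With kappa = min(1/2, eta/16), consider the event where L_n is uniformly
   within eta/4 of Q0, the approximation error at R(n) is at most delta kappa,
   and all samples lie in Z.  There f and f~ both stay above delta/2, where ln
   is (2/delta)-Lipschitz, so the approximate log-likelihood is uniformly
   within eta/4 + 2 kappa <= 3 eta/8 of Q0, and its maximiser cannot leave the
   ball.  Each of the three events has probability tending to one, hence so
   does their intersection. *)

Lemma ln_sub_le_div {R : realType} (a b : R) : 0 < a -> 0 < b ->
  ln a - ln b <= (a - b) / b.
Proof.
move=> a0 b0; rewrite -ln_div ?posrE //.
have -> : (a - b) / b = a / b - 1 by rewrite mulrBl divff ?gt_eqF.
rewrite -{1}(subrK 1 (a / b)) addrC le_ln1Dx //.
by have := divr_gt0 a0 b0; lra.
Qed.

Lemma ler_dist_ln {R : realType} (m a b : R) : 0 < m -> m <= a -> m <= b ->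
  `|ln a - ln b| <= `|a - b| / m.
Proof.
move=> m0; wlog ba : a b / b <= a => [hwlog ma mb|ma mb].
  by case: (leP b a) => [/hwlog|/ltW/hwlog]; last rewrite distrC (distrC a); apply.
have [a0 b0] : 0 < a /\ 0 < b by split; apply: lt_le_trans m0 _.
rewrite !ger0_norm ?subr_ge0 ?ler_ln ?posrE //.
apply: (le_trans (ln_sub_le_div a0 b0)).
by rewrite ler_wpM2l ?subr_ge0 ?lef_pV2 ?posrE.
Qed.

Lemma ler_dist_mean {R : realType} n (a b : 'I_n -> R) (c : R) : 0 <= c ->
  (forall i, `|a i - b i| <= c) ->
  `|n%:R^-1 * \sum_(i < n) a i - n%:R^-1 * \sum_(i < n) b i| <= c.
Proof.
case: n a b => [|n] a b c0 hab; first by rewrite !big_ord0 mulr0 subrr normr0.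
rewrite -mulrBr -sumrB normrM ger0_norm ?invr_ge0 // ler_pdivrMl ?ltr0n //.
apply: (le_trans (ler_norm_sum _ _ _)).
apply: (le_trans (ler_sum _ (fun i _ => hab i))).
by rewrite sumr_const card_ord mulr_natl.
Qed.

Section LogLikelihoodPerturbation.
Variables (R : realType) (T Z Th : Type).
Variables (Zs : set Z) (f g : Z -> Th -> R) (z : nat -> T -> Z).

Lemma avg_loglik_dist n om th (delta k : R) : 0 < delta -> 0 <= k <= 1/2 ->
  (forall i, Zs (z i om)) ->
  (forall zz, Zs zz -> delta < f zz th) ->
  (forall zz, Zs zz -> `|f zz th - g zz th| <= delta * k) ->
  `|avg_loglik g z n om th - avg_loglik f z n om th| <= 2 * k.
Proof.
move=> delta0 /andP[k0 k_half] zZ f_gt fg.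
apply: ler_dist_mean => [|i]; first by rewrite mulr_ge0.
have [f_gt_i fg_i] := (f_gt _ (zZ i), fg _ (zZ i)).
have delta2 : 0 < delta / 2 by rewrite divr_gt0.
have dk_half : delta * k <= delta / 2 by nra.
have := fg_i; rewrite ler_norml => /andP[fg_lo fg_hi].
rewrite distrC; apply: (le_trans (ler_dist_ln delta2 _ _)); try lra.
rewrite ler_pdivrMr //; apply: (le_trans fg_i).
by rewrite [leRHS]mulrC mulrA divfK ?pnatr_eq0.
Qed.

End LogLikelihoodPerturbation.

Lemma sup_err_le {R : realType} {T Z Th : Type} (Zs : set Z) (Ths : set Th)
    (f : Z -> Th -> R) (ft : nat -> T -> Z -> Th -> R) r om (e : R) zz th :
  (sup_err Zs Ths f ft r om <= e%:E)%E -> Zs zz -> Ths th ->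
  `|f zz th - ft r om zz th| <= e.
Proof.
move=> sup_le Zzz Tth; rewrite -lee_fin; apply: le_trans sup_le.
by apply: ereal_sup_ubound; exists zz, th.
Qed.

Lemma compact_strict_max_gap {R : realType} {p : nat} (Th : set 'rV[R]_p)
    (Q : 'rV[R]_p -> R) (theta0 : 'rV[R]_p) (eps : R) :
  0 < eps -> compact Th -> {within Th, continuous Q} ->
  (forall th, Th th -> th != theta0 -> Q th < Q theta0) ->
  exists2 eta, 0 < eta &
    forall th, Th th -> ~ ball theta0 eps th -> Q th + eta <= Q theta0.
Proof.
move=> eps0 cTh cQ Qmax; pose K := Th `&` ~` ball theta0 eps.
have [[c Kc]|K0] := pselect (K !=set0); last first.
  by exists 1 => // th Tth nb; exfalso; apply: K0; exists th.
have cK : compact K.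
  by apply: compact_closedI => //; apply: open_closedC; exact: ball_open.
have cQK : {within K, continuous Q} by apply: continuous_subspaceW cQ => x [].
have [m /[!inE] -[Tm nbm] mmax] := EVT_max_rV (ex_intro _ c Kc) cK cQK.
have m_neq : m != theta0 by apply: contra_notN nbm => /eqP ->; exact: ballxx.
exists (Q theta0 - Q m) => [|th Tth nb]; first by rewrite subr_gt0 Qmax.
have : Q th <= Q m by apply: mmax; rewrite inE.
lra.
Qed.

Lemma approx_argmax_mem {R : realType} {X : Type} (Th B : set X) (L Q : X -> R)
    (x0 xh : X) (c eta : R) :
  Th x0 -> Th xh -> (forall x, Th x -> L x <= L xh) ->
  (forall x, Th x -> `|L x - Q x| <= c) -> 2 * c < eta ->
  (forall x, Th x -> ~ B x -> Q x + eta <= Q x0) -> B xh.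
Proof.
move=> Tx0 Txh Lmax LQ c_eta gap; apply: contrapT => nBxh.
have := gap _ Txh nBxh; have := Lmax _ Tx0.
have := LQ _ Tx0; have := LQ _ Txh; rewrite !ler_norml.
lra.
Qed.

Section ProbToOne.
Context {d} {T : measurableType d} {R : realType} (P : probability T R).

Lemma probability_setI_ge (A B : set T) (a b : R) :
  measurable A -> measurable B ->
  ((1 - a)%:E <= P A)%E -> ((1 - b)%:E <= P B)%E ->
  ((1 - (a + b))%:E <= P (A `&` B))%E.
Proof.
move=> mA mB PA PB.
have mAB : measurable (A `&` B) by exact: measurableI.
have PCAB : (P (~` (A `&` B)) <= P (~` A) + P (~` B))%E.
  by rewrite setCI; apply: measureU2; exact: measurableC.
rewrite !probability_setC // in PCAB.
have finE X : measurable X -> P X = (fine (P X))%:E.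
  by move=> mX; rewrite fineK // fin_num_measure.
move: PA PB PCAB; rewrite (finE _ mA) (finE _ mB) (finE _ mAB).
rewrite -!EFinB -EFinD !lee_fin.
lra.
Qed.

Lemma probability_bigcap1 (S : nat -> set T) :
  (forall i, measurable (S i)) -> (forall i, P (S i) = 1%E) ->
  P (\bigcap_i S i) = 1%E.
Proof.
move=> mS PS.
have mCS : measurable (\bigcap_i S i) by exact: bigcapT_measurable.
have PC0 : P (~` \bigcap_i S i) = 0%E.
  apply/negligibleP; first exact: measurableC.
  rewrite setC_bigcap; apply: negligible_bigcup => i.
  apply/negligibleP; first exact: measurableC.
  by have := probability_setC P (mS i); rewrite PS subee.
by move/eqP: PC0; rewrite probability_setC // sube_eq // add0e => /eqP.
Qed.

Lemma prob_to_one_sub (E F : nat -> set T) :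
  (forall n, E n `<=` F n) -> prob_to_one P E -> prob_to_one P F.
Proof.
move=> EF PE delta delta0; apply: filterS (PE _ delta0) => n [A [mA AE PA]].
by exists A; split => //; apply: subset_trans (EF n).
Qed.

Lemma prob_to_one_setI (E F : nat -> set T) :
  prob_to_one P E -> prob_to_one P F -> prob_to_one P (fun n => E n `&` F n).
Proof.
move=> PE PF delta delta0; have delta20 : 0 < delta / 2 by rewrite divr_gt0.
apply: filterS2 (PE _ delta20) (PF _ delta20) => n [A [mA AE PA]] [B [mB BF PB]].
exists (A `&` B); split; first exact: measurableI.
  by move=> x [/AE Ex /BF Fx].
by rewrite [delta in (1 - delta)%:E]splitr; exact: probability_setI_ge.
Qed.

Lemma prob_to_one_cst (A : set T) :
  measurable A -> P A = 1%E -> prob_to_one P (fun=> A).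
Proof.
move=> mA PA delta delta0; apply: nearW => n; exists A; split => //.
by rewrite PA lee_fin lerBlDr lerDl ltW.
Qed.

Lemma prob_to_one_comp (E : nat -> set T) (rho : nat -> nat) :
  (forall M, exists N, forall n, (N <= n)%N -> (M <= rho n)%N) ->
  prob_to_one P E -> prob_to_one P (E \o rho).
Proof.
move=> rho_oo PE delta delta0; have [N _ HN] := PE _ delta0.
by have [M HM] := rho_oo N; exists M => // n /HM /HN.
Qed.

End ProbToOne.

Theorem corollary10
  (R : realType) (p q dd : nat)
  (* the probability space carrying the data and the (random) nodes/weights *)
  (dT : measure_display) (T : measurableType dT) (P : probability T R)
  (* parameter space Theta in R^p, sample space Z in R^q, domain Omega in R^d *)
  (Th : set 'rV[R]_p) (Zs : set (q.-tuple R)) (Om : set (dd.-tuple R))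
  (* reference measure on R^q (Lebesgue or counting): f(.;theta) is a density/pmf w.r.t. it *)
  (nu : {measure set (q.-tuple R) -> \bar R})
  (* measure dv on R^d of the integral representation *)
  (mu : {measure set (dd.-tuple R) -> \bar R})
  (phi : dd.-tuple R -> q.-tuple R -> 'rV[R]_p -> R)
  (wt : dd.-tuple R -> R)
  (f : q.-tuple R -> 'rV[R]_p -> R)
  (theta0 : 'rV[R]_p)
  (z : nat -> T -> q.-tuple R)
  (v : nat -> nat -> T -> dd.-tuple R) (w : nat -> nat -> T -> R)
  (Rn : nat -> nat)
  (Q0 : 'rV[R]_p -> R)
  (theta_hat : nat -> T -> 'rV[R]_p) :
  (* weight function omega : Omega -> R_+ *)
  (forall x, Om x -> 0 <= wt x) ->
  (* integral representation f(z;theta) = int_Omega phi(v,z,theta) omega(v) dv *)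
  (forall zz th, Zs zz -> Th th ->
     (\int[mu]_(x in Om) (phi x zz th * wt x)%:E)%E = (f zz th)%:E) ->
  (* {f(.;theta)} is a family of probability mass / density functions on Z *)
  measurable Zs ->
  (forall zz th, Zs zz -> Th th -> 0 <= f zz th) ->
  (forall th, Th th -> (\int[nu]_(zz in Zs) (f zz th)%:E)%E = 1%E) ->
  (* z_1, z_2, ... i.i.d. from f(.;theta0) *)
  (forall i, measurable_fun setT (z i)) ->
  mutually_independent P z ->
  (forall i (A : set (q.-tuple R)), measurable A ->
     P (z i @^-1` A) = (\int[nu]_(zz in A `&` Zs) (f zz theta0)%:E)%E) ->
  (* nodes lie in Omega *)
  (forall j r om, Om (v j r om)) ->
  (* theta_hat_MAL maximizes the approximate log-likelihood over Theta *)
  (forall n om, Th (theta_hat n om) /\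
     forall th, Th th ->
       avg_loglik (ftilde phi v w (Rn n) om) z n om th
       <= avg_loglik (ftilde phi v w (Rn n) om) z n om (theta_hat n om)) ->
  (* Q0 continuous, uniquely maximized at theta0 in Theta; Theta compact *)
  Th theta0 ->
  {within Th, continuous Q0} ->
  (forall th, Th th -> th != theta0 -> Q0 th < Q0 theta0) ->
  compact Th ->
  (* L_n -> Q0 uniformly in probability on Theta *)
  (forall eps : R, 0 < eps ->
     prob_to_one P (fun n => [set om | forall th, Th th ->
        `|avg_loglik f z n om th - Q0 th| <= eps])) ->
  (* (i) f bounded below by delta > 0 *)
  (exists2 delta : R, 0 < delta &
     forall zz th, Zs zz -> Th th -> delta < f zz th) ->
  (* (ii) phi continuous in theta on Theta *)
  (forall x zz, Om x -> Zs zz -> {within Th, continuous (phi x zz)}) ->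
  (* (iii) plim_{r -> oo} bar E_0(r) = 0 *)
  (forall eps : R, 0 < eps ->
     prob_to_one P (fun r => [set om |
        (sup_err Zs Th f (ftilde phi v w) r om <= eps%:E)%E])) ->
  (* (iv) R(n) monotonically increasing with R(n) -> oo *)
  {homo Rn : m n / (m <= n)%N} ->
  (forall M, exists N, forall n, (N <= n)%N -> (M <= Rn n)%N) ->
  (* conclusion: theta_hat_MAL -> theta0 in probability *)
  forall eps : R, 0 < eps ->
    prob_to_one P (fun n => [set om | `|theta_hat n om - theta0| <= eps]).
Proof.
move=> _ _ mZs _ f_int1 z_meas _ z_law _ th_hat_max Th_th0 Q0_cont Q0_max Th_compact
  L_unif [delta delta0 f_gt] _ err_plim _ Rn_oo eps eps0.
have [eta eta0 Q0_gap] := compact_strict_max_gap eps0 Th_compact Q0_cont Q0_max.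
pose kappa := Num.min (1 / 2) (eta / 16).
have kappa0 : 0 < kappa by rewrite lt_min !divr_gt0.
have kappa_range : 0 <= kappa <= 1 / 2 by rewrite ltW // ge_min lexx.
have kappa_eta : kappa <= eta / 16 by rewrite ge_min lexx orbT.
have mzZs i : measurable (z i @^-1` Zs).
  by have := z_meas i measurableT _ mZs; rewrite setTI.
have z_in_Zs : P (\bigcap_i z i @^-1` Zs) = 1%E.
  by apply: probability_bigcap1 => // i; rewrite z_law // setIid f_int1.
have L_close := L_unif _ (divr_gt0 eta0 (ltr0n _ 4)).
have err_small := prob_to_one_comp Rn_oo (err_plim _ (mulr_gt0 delta0 kappa0)).
have all_z_Zs := prob_to_one_cst (bigcapT_measurable mzZs) z_in_Zs.
apply: prob_to_one_sub (prob_to_one_setI (prob_to_one_setI L_close err_small)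
  all_z_Zs) => n om [[/= L_Q0 ft_f] zZ].
have {}zZ i : Zs (z i om) by exact: zZ.
have [Th_th_hat th_hat_argmax] := th_hat_max n om.
have Lt_L th : Th th -> `|avg_loglik (ftilde phi v w (Rn n) om) z n om th -
                          avg_loglik f z n om th| <= eta / 8.
  move=> Tth; apply: (le_trans (avg_loglik_dist n delta0 kappa_range zZ
    (fun zz Zz => f_gt zz th Zz Tth) (fun zz Zz => sup_err_le ft_f Zz Tth))).
  lra.
have L_Q0_approx th : Th th ->
    `|avg_loglik (ftilde phi v w (Rn n) om) z n om th - Q0 th| <= 3 * eta / 8.
  move=> Tth; have := Lt_L _ Tth; have := L_Q0 _ Tth; rewrite !ler_norml.
  lra.
have : ball theta0 eps (theta_hat n om).
  apply: approx_argmax_mem Th_th0 Th_th_hat th_hat_argmax L_Q0_approx _ Q0_gap.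
  lra.
by rewrite -ball_normE /= distrC => /ltW.
Qed.
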